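(* Let $L$ be a nonabelian finite simple group whose order is divisible by a prime $r$, and let $x\in\mathrm{Aut}(L)$, $x\neq 1$. Suppose $x$ leaves invariant a subgroup $H\leq L$ and a normal subgroup $N$ of $H$, thus inducing an automorphism $\overline{x}$ of $\overline{H}=H/N$. Suppose also that $\overline{H}$ contains a simple $\overline{x}$-invariant subgroup $\overline{L}$ on which $\overline{x}$ acts nontrivially and whose order is divisible by $r$. Then $\beta_r(x,L)\leq\beta_r(\overline{x},\overline{L})$.
   Context: For a nonabelian finite simple group $L$ (identified with $\mathrm{Inn}(L)\leq\mathrm{Aut}(L)$), a nontrivial $x\in\mathrm{Aut}(L)$ and a prime $r$ dividing $|L|$, $\beta_r(x,L)$ denotes the smallest number $k$ such that there exist $g_1,\dots,g_k\in L$ for which $\langle x^{g_1},\dots,x^{g_k}\rangle\leq\langle L,x\rangle$ has order divisible by $r$. In $\beta_r(\overline{x},\overline{L})$, $\overline{x}$ is regarded (via its restriction) as an automorphism of $\overline{L}$. *)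

From mathcomp Require Import all_boot all_fingroup.
From mathcomp Require Import automorphism quotient gseries.
Set Implicit Arguments. Unset Strict Implicit. Unset Printing Implicit Defensive.
Import GroupScope.
Local Open Scope group_scope.

(* Automorphisms of a group L (in some finGroupType gT) are modelled, as in
   MathComp, by elements a of Aut L : {set {perm gT}}.  L is identified with
   Inn(L) via the inner-automorphism map y |-> conj_aut L y; thus the conjugate
   a^y of a by y in L (computed inside Aut L) is a ^ conj_aut L y. *)

Definition betab (gT : finGroupType) (r : nat) (L : {group gT})
  (a : {perm gT}) (k : nat) : bool :=
  [exists t : k.-tuple gT,
     all (fun y => y \in L) t &&
     (r %| #| << [set (a ^ conj_aut L y)%g | y in t] >> |)].

(* beta_r(a,L) <= beta_r(b,M):  beta_r(b,M) is the least k with betab r M b k;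
   the inequality says some k' <= that least k satisfies betab r L a k'. *)
Definition beta_le (gT rT : finGroupType) (r : nat)
  (L : {group gT}) (a : {perm gT}) (M : {group rT}) (b : {perm rT}) : Prop :=
  forall k, betab r M b k -> exists2 k', (k' <= k)%N & betab r L a k'.

(* Lift g_1, ..., g_k in Lbar to h_1, ..., h_k in H.  Every element of
   A = <a^{h_1}, ..., a^{h_k}> stabilises H, and the automorphisms of Lbar
   it induces on the cosets of N form a group containing
   B = <abar^{g_1}, ..., abar^{g_k}>, since a^{h_i} induces abar^{g_i}.  An
   element of B of order r is then induced by some p in A, and the order of
   the induced automorphism divides that of p; hence r divides |A|. *)

From mathcomp Require Import all_boot all_fingroup.
From mathcomp Require Import automorphism quotient gseries pgroup cyclic.
Set Implicit Arguments. Unset Strict Implicit. Unset Printing Implicit Defensive.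
Import GroupScope.
Local Open Scope group_scope.

Section InducedAutomorphisms.

Variables (gT : finGroupType) (H N : {group gT}) (Lbar : {group coset_of N}).
Hypothesis sLbarH : Lbar \subset H / N.

Definition induces (p : {perm gT}) (q : {perm coset_of N}) : bool :=
  (q \in Aut Lbar) && [forall h in H, (p h \in H) &&
     ((coset N h \in Lbar) ==> (q (coset N h) == coset N (p h)))].

Lemma inducesP (p : {perm gT}) (q : {perm coset_of N}) :
  reflect ((q \in Aut Lbar) /\ forall h, h \in H ->
             p h \in H /\ (coset N h \in Lbar -> q (coset N h) = coset N (p h)))
          (induces p q).
Proof.
apply: (iffP andP) => [[Aq /forall_inP indH] | [Aq indH]]; split => //.
  move=> h Hh; have /andP[-> /implyP indh] := indH h Hh.
  by split=> // Lh; apply/eqP/indh.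
apply/forall_inP => h Hh; have [-> indh] := indH h Hh.
by apply/implyP => Lh; rewrite indh.
Qed.

Lemma induces1 : induces 1 1.
Proof. by apply/inducesP; split=> [|h Hh]; rewrite ?group1 ?perm1. Qed.

Lemma inducesM (p p' : {perm gT}) (q q' : {perm coset_of N}) :
  induces p q -> induces p' q' -> induces (p * p') (q * q').
Proof.
move=> /inducesP[Aq indH] /inducesP[Aq' indH']; apply/inducesP.
split=> [|h Hh]; first exact: groupM.
have [Hph indh] := indH h Hh; have [Hpph indph] := indH' _ Hph.
rewrite !permM; split=> // Lh.
have Lph : coset N (p h) \in Lbar by rewrite -indh ?(Aut_closed Aq).
by rewrite indh // indph.
Qed.

Lemma inducesX (p : {perm gT}) (q : {perm coset_of N}) m :
  induces p q -> induces (p ^+ m) (q ^+ m).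
Proof.
move=> ind_pq; elim: m => [|m IHm]; first exact: induces1.
by rewrite !expgS; apply: inducesM.
Qed.

Lemma induces_trivial (q : {perm coset_of N}) : induces 1 q -> q = 1.
Proof.
move=> /inducesP[Aq indH]; apply/permP => z; rewrite perm1.
have [Lz | /(out_Aut Aq)//] := boolP (z \in Lbar).
have /morphimP[h _ Hh Dz] := subsetP sLbarH z Lz; rewrite Dz in Lz *.
by have [_ ->] := indH h Hh; rewrite ?perm1.
Qed.

Lemma order_induces_dvdn (p : {perm gT}) (q : {perm coset_of N}) :
  induces p q -> (#[q] %| #[p])%N.
Proof.
move=> ind_pq; rewrite order_dvdn; apply/eqP/induces_trivial.
by rewrite -(expg_order p); apply: inducesX.
Qed.

Definition induced_by (A : {set {perm gT}}) : {set {perm coset_of N}} :=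
  [set q | [exists p in A, induces p q]].

Lemma group_set_induced_by (A : {group {perm gT}}) : group_set (induced_by A).
Proof.
apply/group_setP; split=> [|q q']; rewrite !inE.
  by apply/exists_inP; exists 1; rewrite ?group1 ?induces1.
case/exists_inP=> p Ap ind_pq /exists_inP[p' Ap' ind_pq'].
by apply/exists_inP; exists (p * p'); rewrite ?groupM ?inducesM.
Qed.

Canonical induced_by_group (A : {group {perm gT}}) :=
  Group (group_set_induced_by A).

Lemma prime_dvd_induced_by (A : {group {perm gT}}) (B : {group {perm coset_of N}})
    (r : nat) :
  prime r -> B \subset induced_by A -> (r %| #|B|)%N -> (r %| #|A|)%N.
Proof.
move=> pr_r sBA /(Cauchy pr_r)[q Bq <-].
have := subsetP sBA q Bq; rewrite inE => /exists_inP[p Ap ind_pq].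
by apply: dvdn_trans (order_dvdG Ap); apply: order_induces_dvdn.
Qed.

Variable L : {group gT}.
Hypotheses (sHL : H \subset L) (nNH : H \subset 'N(N)).

Lemma induces_conj_aut h :
  h \in H -> coset N h \in Lbar ->
  induces (conj_aut L h) (conj_aut Lbar (coset N h)).
Proof.
move=> Hh Lh; apply/inducesP; split.
  by rewrite (subsetP (Aut_conj_aut Lbar Lbar)) ?mem_morphim ?(subsetP (normG _)).
have nLh : h \in 'N(L) by rewrite (subsetP (normG L)) ?(subsetP sHL).
move=> x Hx; rewrite norm_conj_autE ?(subsetP sHL) //; split=> [|Lx].
  by rewrite groupJ.
rewrite norm_conj_autE ?(subsetP (normG _)) //.
by rewrite morphJ ?(subsetP nNH).
Qed.

Lemma inducesJ (p : {perm gT}) (q : {perm coset_of N}) h :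
  h \in H -> coset N h \in Lbar -> induces p q ->
  induces (p ^ conj_aut L h) (q ^ conj_aut Lbar (coset N h)).
Proof.
move=> Hh Lh ind_pq.
have nLh : h \in 'N(L) by rewrite (subsetP (normG L)) ?(subsetP sHL).
have nLbarh : coset N h \in 'N(Lbar) by rewrite (subsetP (normG _)).
rewrite /conjg -(morphV _ nLh) -(morphV _ nLbarh) -morphV ?(subsetP nNH) //.
rewrite !mulgA; apply: inducesM; last exact: induces_conj_aut.
apply: inducesM ind_pq; apply: induces_conj_aut; first by rewrite groupV.
by rewrite morphV ?(subsetP nNH) ?groupV.
Qed.

End InducedAutomorphisms.

Definition coset_lift (gT : finGroupType) (H N : {set gT}) (y : coset_of N) : gT :=
  odflt 1 [pick h in H | coset N h == y].

Lemma coset_liftP (gT : finGroupType) (H N : {group gT}) (y : coset_of N) :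
  y \in H / N -> coset_lift H y \in H /\ coset N (coset_lift H y) = y.
Proof.
rewrite /coset_lift; case: pickP => [h /andP[Hh /eqP->] | noh] //=.
by case/morphimP=> h _ Hh Dy; have := noh h; rewrite Hh Dy eqxx.
Qed.

Theorem lemma1p4 (gT : finGroupType) (L H N : {group gT}) (a : {perm gT})
  (r : nat)
  (simL : simple L) (nabL : ~~ abelian L)
  (pr_r : prime r) (rL : (r %| #|L|)%N)
  (aAut : a \in Aut L) (a_ntriv : a != 1)
  (sHL : H \subset L) (aH : a @: H = H)
  (nNH : N <| H) (aN : a @: N = N)
  (Lbar : {group coset_of N}) (sLbarH : Lbar \subset H / N)
  (simLbar : simple Lbar) (rLbar : (r %| #|Lbar|)%N)
  (invLbar : forall h, h \in H -> coset N h \in Lbar -> coset N (a h) \in Lbar)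
  (abar : {perm coset_of N}) (abarAut : abar \in Aut Lbar)
  (abar_def : forall h, h \in H -> coset N h \in Lbar ->
                abar (coset N h) = coset N (a h))
  (abar_ntriv : exists2 y, y \in Lbar & abar y != y) :
  beta_le r L a Lbar abar.
Proof.
move=> k /existsP[t /andP[/allP tLbar r_dvd_B]]; exists k => //.
have ind_a : induces H Lbar a abar.
  apply/inducesP; split=> // h Hh.
  by split; [rewrite -aH imset_f | exact: abar_def].
have liftP y : y \in t -> coset_lift H y \in H /\ coset N (coset_lift H y) = y.
  by move=> ty; apply/coset_liftP/(subsetP sLbarH)/tLbar.
apply/existsP; exists (map_tuple (@coset_lift _ H N) t); apply/andP; split.
  by apply/allP=> _ /mapP[y ty ->]; rewrite (subsetP sHL) //; case: (liftP y ty).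
apply: (prime_dvd_induced_by sLbarH pr_r _ r_dvd_B).
rewrite gen_subG; apply/subsetP=> _ /imsetP[y ty ->]; rewrite inE.
have [Hy Dy] := liftP y ty.
apply/exists_inP; exists (a ^ conj_aut L (coset_lift H y)).
  by apply/mem_gen/imsetP; exists (coset_lift H y); rewrite ?map_f.
rewrite -{2}Dy; apply: inducesJ ind_a => //; first exact: normal_norm.
by rewrite Dy tLbar.
Qed.
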